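(* Let $(G,* )$ be a metrizable topological group. The following are equivalent: (1) $G$ has the property ${\sf S}_c(\mathcal{O}_{\sf nbd},\mathcal{O})$; (2) $G$ has the Haver property with respect to every left-invariant metric on $G$ that is compatible with (generates) the topology of $G$.
   Context: For a topological group $(G,* )$ with identity $e$ and a neighborhood $U$ of $e$, let $\mathcal{O}(U)=\{x*U: x\in G\}$, an open cover of $G$, and $\mathcal{O}_{\sf nbd}=\{\mathcal{O}(U): U \text{ a neighborhood of } e\}$. $\mathcal{O}$ denotes the collection of all open covers of $G$. A family $\mathcal{B}$ refines a family $\mathcal{A}$ if every member of $\mathcal{B}$ is contained in some member of $\mathcal{A}$. For collections $\mathcal{A},\mathcal{B}$ of families of subsets of $G$, ${\sf S}_c(\mathcal{A},\mathcal{B})$ is the statement: for each sequence $(A_n:n<\infty)$ of elements of $\mathcal{A}$ there is a sequence $(B_n:n<\infty)$ such that each $B_n$ is a pairwise disjoint family of open sets refining $A_n$ and $\bigcup_{n<\infty}B_n\in\mathcal{B}$. A metrizable space $X$ is Haver with respect to a metric $d$ if for each sequence $(\epsilon_n:n<\infty)$ of positive reals there is a sequence $(\mathcal{V}_n:n<\infty)$ where each $\mathcal{V}_n$ is a pairwise disjoint family of open sets each of $d$-diameter less than $\epsilon_n$, such that $\bigcup_{n<\infty}\mathcal{V}_n$ covers $X$. A metric $d$ on $G$ is left-invariant if $d(g*x,g*y)=d(x,y)$ for all $g,x,y\in G$. *)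

From Stdlib Require Import Reals.
Open Scope R_scope.

Definition is_topology {G : Type} (opn : (G -> Prop) -> Prop) : Prop :=
  opn (fun _ => True) /\
  (forall A B, opn A -> opn B -> opn (fun x => A x /\ B x)) /\
  (forall F : (G -> Prop) -> Prop,
      (forall A, F A -> opn A) -> opn (fun x => exists A, F A /\ A x)).

Definition is_group {G : Type} (op : G -> G -> G) (e : G) (inv : G -> G) : Prop :=
  (forall x y z, op (op x y) z = op x (op y z)) /\
  (forall x, op e x = x) /\ (forall x, op x e = x) /\
  (forall x, op (inv x) x = e) /\ (forall x, op x (inv x) = e).

Definition is_topological_group {G : Type} (opn : (G -> Prop) -> Prop)
  (op : G -> G -> G) (e : G) (inv : G -> G) : Prop :=
  is_topology opn /\ is_group op e inv /\
  (forall W x y, opn W -> W (op x y) ->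
     exists U V, opn U /\ opn V /\ U x /\ V y /\
       (forall a b, U a -> V b -> W (op a b))) /\
  (forall W, opn W -> opn (fun x => W (inv x))).

Definition is_metric {G : Type} (d : G -> G -> R) : Prop :=
  (forall x y, 0 <= d x y) /\
  (forall x y, d x y = 0 <-> x = y) /\
  (forall x y, d x y = d y x) /\
  (forall x y z, d x z <= d x y + d y z).

Definition metric_compatible {G : Type} (d : G -> G -> R) (opn : (G -> Prop) -> Prop) : Prop :=
  forall U, opn U <-> (forall x, U x -> exists r, 0 < r /\ forall y, d x y < r -> U y).

Definition metrizable {G : Type} (opn : (G -> Prop) -> Prop) : Prop :=
  exists d : G -> G -> R, is_metric d /\ metric_compatible d opn.

Definition left_invariant {G : Type} (op : G -> G -> G) (d : G -> G -> R) : Prop :=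
  forall g x y, d (op g x) (op g y) = d x y.

Definition ltrans {G : Type} (op : G -> G -> G) (x : G) (U : G -> Prop) : G -> Prop :=
  fun z => exists u, U u /\ z = op x u.

Definition disjoint_open_family {G : Type} (opn : (G -> Prop) -> Prop)
  (B : (G -> Prop) -> Prop) : Prop :=
  (forall A, B A -> opn A) /\
  (forall A A', B A -> B A' -> (exists z, A z /\ A' z) -> forall y, A y <-> A' y).

Definition refines {G : Type} (B A : (G -> Prop) -> Prop) : Prop :=
  forall V, B V -> exists W, A W /\ (forall z, V z -> W z).

Definition union_covers {G : Type} (Bs : nat -> (G -> Prop) -> Prop) : Prop :=
  forall x, exists n V, Bs n V /\ V x.

Definition cover_of_nbd {G : Type} (op : G -> G -> G) (U : G -> Prop) : (G -> Prop) -> Prop :=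
  fun W => exists x, W = ltrans op x U.

(** S_c(O_nbd, O): neighborhoods of e are open sets containing e. *)
Definition Sc_Onbd_O {G : Type} (opn : (G -> Prop) -> Prop) (op : G -> G -> G) (e : G) : Prop :=
  forall U : nat -> G -> Prop,
    (forall n, opn (U n) /\ U n e) ->
    exists Bs : nat -> (G -> Prop) -> Prop,
      (forall n, disjoint_open_family opn (Bs n) /\ refines (Bs n) (cover_of_nbd op (U n))) /\
      union_covers Bs.

Definition diam_lt {G : Type} (d : G -> G -> R) (A : G -> Prop) (eps : R) : Prop :=
  exists r, r < eps /\ forall x y, A x -> A y -> d x y <= r.

Definition Haver {G : Type} (opn : (G -> Prop) -> Prop) (d : G -> G -> R) : Prop :=
  forall eps : nat -> R, (forall n, 0 < eps n) ->
    exists Vs : nat -> (G -> Prop) -> Prop,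
      (forall n, disjoint_open_family opn (Vs n) /\
                 (forall V, Vs n V -> diam_lt d V (eps n))) /\
      union_covers Vs.

From Stdlib Require Import Reals Lra Lia List Classical ClassicalEpsilon.
Open Scope R_scope.

(* Both directions rest on one observation: for a left-invariant metric d,
   a set of diameter < r through v lies in v*B(e,r), and conversely
   x*B(e,r/3) has diameter < r.  Hence the cover O(B(e,r)) and "sets of
   diameter < r" refine each other, and S_c for balls around e is Haver.
   For (2) => (1) one also needs that a compatible left-invariant metric
   EXISTS; this is the Birkhoff-Kakutani theorem, proved here from scratch:
   - from a compatible metric d0 we choose open symmetric neighbourhoods
     of e with V_0 = G and V_(n+1)^3 inside V_n and inside B_d0(e, 2^-n);
   - N(z) = inf of sum 2^-(n_i) over factorisations z = z_1 ... z_k with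
     z_i in V_(n_i) is a symmetric subadditive "chain norm", and the key
     (Kelley) lemma N(z) < 2^-(m+1) => z in V_m makes d(x,y) = N(x^-1 y)
     a compatible left-invariant metric. *)

Set Implicit Arguments.

Section GroupFacts.
Variables (G : Type) (op : G -> G -> G) (e : G) (inv : G -> G).
Hypothesis Hg : is_group op e inv.

Lemma mulA x y z : op (op x y) z = op x (op y z).
Proof. destruct Hg as (H & _); apply H. Qed.

Lemma mul1g x : op e x = x.
Proof. destruct Hg as (_ & H & _); apply H. Qed.

Lemma mulg1 x : op x e = x.
Proof. destruct Hg as (_ & _ & H & _); apply H. Qed.

Lemma mulVg x : op (inv x) x = e.
Proof. destruct Hg as (_ & _ & _ & H & _); apply H. Qed.

Lemma mulgV x : op x (inv x) = e.
Proof. destruct Hg as (_ & _ & _ & _ & H); apply H. Qed.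

Lemma inv_unique a b : op a b = e -> b = inv a.
Proof. intros H. rewrite <- (mul1g b), <- (mulVg a), mulA, H, mulg1. reflexivity. Qed.

Lemma invK x : inv (inv x) = x.
Proof. symmetry. apply inv_unique, mulVg. Qed.

Lemma inv1 : inv e = e.
Proof. symmetry. apply inv_unique, mul1g. Qed.

Lemma invM x y : inv (op x y) = op (inv y) (inv x).
Proof.
  symmetry. apply inv_unique.
  rewrite mulA, <- (mulA y), mulgV, mul1g, mulgV. reflexivity.
Qed.

Lemma mulKg x y : op (inv x) (op x y) = y.
Proof. rewrite <- mulA, mulVg, mul1g. reflexivity. Qed.

Lemma mulKVg x y : op x (op (inv x) y) = y.
Proof. rewrite <- mulA, mulgV, mul1g. reflexivity. Qed.

End GroupFacts.

Section MetricFacts.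
Variables (G : Type) (opn : (G -> Prop) -> Prop) (d : G -> G -> R).
Hypotheses (Hm : is_metric d) (Hc : metric_compatible d opn).

Lemma ball_open x r : opn (fun z => d x z < r).
Proof.
  destruct Hm as (_ & _ & _ & Htri). apply Hc. intros y Hy.
  exists (r - d x y). split; [lra|]. intros w Hw. pose proof (Htri x y w). lra.
Qed.

Lemma open_ball_inside U x : opn U -> U x -> exists r, 0 < r /\ forall y, d x y < r -> U y.
Proof. intros HU Ux. exact (proj1 (Hc U) HU x Ux). Qed.

End MetricFacts.

Section LeftInvariant.
Variables (G : Type) (op : G -> G -> G) (e : G) (inv : G -> G) (d : G -> G -> R).
Hypotheses (Hg : is_group op e inv) (Hli : left_invariant op d).

Lemma dist_from_e x y : d x y = d e (op (inv x) y).
Proof. rewrite <- (mulVg Hg x), Hli. reflexivity. Qed.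

End LeftInvariant.

Lemma half_pow_pos n : 0 < (/2) ^ n.
Proof. apply pow_lt. lra. Qed.

Lemma half_pow_anti n m : (n <= m)%nat -> (/2) ^ m <= (/2) ^ n.
Proof. induction 1; [lra|]. simpl. pose proof (half_pow_pos m). lra. Qed.

Lemma half_pow_le_inv n m : (/2) ^ n <= (/2) ^ m -> (m <= n)%nat.
Proof.
  intros H. destruct (Nat.le_gt_cases m n) as [Hle|Hgt]; [exact Hle|].
  pose proof (half_pow_anti Hgt). simpl in *. pose proof (half_pow_pos n). lra.
Qed.

Lemma half_pow_small r : 0 < r -> exists n, (/2) ^ n < r.
Proof.
  intros Hr. destruct (pow_lt_1_zero (/2)) with (y := r) as [N HN]; auto.
  - rewrite Rabs_pos_eq; lra.
  - exists N. specialize (HN N (le_n _)).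
    rewrite Rabs_pos_eq in HN; [exact HN | left; apply half_pow_pos].
Qed.

Section Chains.
Variables (G : Type) (op : G -> G -> G) (e : G) (inv : G -> G).
Hypothesis Hg : is_group op e inv.

Definition chain_prod (l : list (nat * G)) : G :=
  fold_right (fun p acc => op (snd p) acc) e l.

Definition chain_weight (l : list (nat * G)) : R :=
  fold_right (fun p acc => (/2) ^ fst p + acc) 0 l.

Lemma chain_prod_app l1 l2 :
  chain_prod (l1 ++ l2) = op (chain_prod l1) (chain_prod l2).
Proof.
  induction l1 as [|p l1 IH]; simpl.
  - rewrite (mul1g Hg). reflexivity.
  - rewrite IH, (mulA Hg). reflexivity.
Qed.

Lemma chain_weight_app l1 l2 :
  chain_weight (l1 ++ l2) = chain_weight l1 + chain_weight l2.
Proof. induction l1 as [|p l1 IH]; simpl; rewrite ?IH; lra. Qed.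

Lemma chain_weight_nonneg l : 0 <= chain_weight l.
Proof.
  induction l as [|p l IH]; simpl; [lra|]. pose proof (half_pow_pos (fst p)). lra.
Qed.

Lemma chain_split l t :
  0 <= t -> t < chain_weight l ->
  exists l1 p l2, l = l1 ++ p :: l2 /\
    chain_weight l1 <= t /\ t < chain_weight l1 + (/2) ^ fst p.
Proof.
  revert t. induction l as [|p l IH]; intros t Ht Hl; simpl in Hl; [lra|].
  destruct (Rlt_le_dec t ((/2) ^ fst p)) as [Hlt|Hge].
  - exists nil, p, l. simpl. repeat split; lra.
  - destruct (IH (t - (/2) ^ fst p)) as (l1 & q & l2 & -> & H1 & H2); [lra|lra|].
    exists (p :: l1), q, l2. simpl. repeat split; lra.
Qed.

Definition chain_inv (l : list (nat * G)) : list (nat * G) :=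
  rev (map (fun p => (fst p, inv (snd p))) l).

Lemma chain_inv_prod l : chain_prod (chain_inv l) = inv (chain_prod l).
Proof.
  induction l as [|p l IH]; unfold chain_inv in *; simpl.
  - symmetry. apply (inv1 Hg).
  - rewrite chain_prod_app, IH, (invM Hg). simpl. rewrite (mulg1 Hg). reflexivity.
Qed.

Lemma chain_inv_weight l : chain_weight (chain_inv l) = chain_weight l.
Proof.
  induction l as [|p l IH]; unfold chain_inv in *; simpl; [reflexivity|].
  rewrite chain_weight_app, IH. simpl. lra.
Qed.

Variable V : nat -> G -> Prop.

Definition chain_in (l : list (nat * G)) : Prop :=
  Forall (fun p => V (fst p) (snd p)) l.

Lemma chain_in_inv (Vsym : forall n x, V n x -> V n (inv x)) l :
  chain_in l -> chain_in (chain_inv l).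
Proof.
  intros Hl. apply Forall_rev, Forall_map.
  eapply Forall_impl; [|exact Hl]. intros p Hp. apply Vsym, Hp.
Qed.

Hypotheses (V_e : forall n, V n e)
  (V_cube : forall n a b c, V (S n) a -> V (S n) b -> V (S n) c -> V n (op a (op b c))).

Lemma V_mono n m z : (n <= m)%nat -> V m z -> V n z.
Proof.
  induction 1 as [|m _ IH]; [auto|]. intros Hz. apply IH.
  rewrite <- (mulg1 Hg z), <- (mulg1 Hg e). apply V_cube; auto.
Qed.

(* Split the chain at half its weight into a left part, one link and a
   right part; each part has weight at most 2^-(m+2), so V_(m+1)^3 in V_m. *)
Lemma chain_small_in_V l m :
  chain_in l -> chain_weight l <= (/2) ^ S m -> V m (chain_prod l).
Proof.
  remember (length l) as k eqn:Hk. revert l m Hk.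
  induction k as [k IH] using (well_founded_induction Wf_nat.lt_wf). intros l m Hk Hin Hw.
  destruct l as [|p0 l0]; [apply V_e|].
  set (w := chain_weight (p0 :: l0)) in *.
  assert (Hpos : 0 < w).
  { unfold w. simpl. pose proof (half_pow_pos (fst p0)).
    pose proof (chain_weight_nonneg l0). lra. }
  destruct (chain_split (p0 :: l0) (t := w / 2)) as (l1 & p & l2 & Hsplit & H1 & H2);
    [lra|fold w; lra|].
  assert (Hw_split : w = chain_weight l1 + ((/2) ^ fst p + chain_weight l2)).
  { unfold w. rewrite Hsplit, chain_weight_app. reflexivity. }
  assert (Hlen : length (p0 :: l0) = (length l1 + S (length l2))%nat).
  { rewrite Hsplit, length_app. reflexivity. }
  rewrite Hsplit in Hin |- *. unfold chain_in in Hin.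
  apply Forall_app in Hin as [Hin1 Hin2]. inversion Hin2 as [|? ? Hp Hin2']; subst.
  pose proof (chain_weight_nonneg l1). pose proof (chain_weight_nonneg l2).
  pose proof (half_pow_pos (fst p)).
  rewrite chain_prod_app. simpl. apply V_cube.
  - apply (IH (length l1)); auto; [lia|]. simpl in Hw |- *. lra.
  - apply (V_mono (n := S m) (m := fst p)); [apply half_pow_le_inv; lra | exact Hp].
  - apply (IH (length l2)); auto; [lia|]. simpl in Hw |- *. lra.
Qed.

End Chains.

Section ChainNorm.
Variables (G : Type) (op : G -> G -> G) (e : G) (inv : G -> G).
Hypothesis Hg : is_group op e inv.
Variable V : nat -> G -> Prop.
Hypothesis V_full : forall z, V 0%nat z.

Definition is_inf (E : R -> Prop) (g : R) : Prop :=
  (forall s, E s -> g <= s) /\ (forall g', (forall s, E s -> g' <= s) -> g' <= g).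

Lemma inf_exists (E : R -> Prop) :
  (exists s, E s) -> (forall s, E s -> 0 <= s) -> exists g, is_inf E g.
Proof.
  intros [s0 Hs0] Hpos.
  destruct (completeness (fun x => E (- x))) as [m [Hub Hlub]].
  - exists 0. intros x Hx. apply Hpos in Hx. lra.
  - exists (- s0). rewrite Ropp_involutive. exact Hs0.
  - exists (- m). split.
    + intros s Hs. assert (- s <= m) by (apply Hub; rewrite Ropp_involutive; exact Hs). lra.
    + intros g' Hg'. assert (m <= - g') by (apply Hlub; intros x Hx; apply Hg' in Hx; lra).
      lra.
Qed.

Definition chain_weights (z : G) (s : R) : Prop :=
  exists l, chain_in V l /\ chain_prod op e l = z /\ s = chain_weight l.

Definition chain_norm (z : G) : R := epsilon (inhabits 0) (is_inf (chain_weights z)).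

Lemma chain_norm_spec z : is_inf (chain_weights z) (chain_norm z).
Proof.
  unfold chain_norm. apply epsilon_spec, inf_exists.
  - exists (chain_weight ((0%nat, z) :: nil)), ((0%nat, z) :: nil).
    split; [constructor; [apply V_full | constructor]|].
    split; [simpl; apply (mulg1 Hg) | reflexivity].
  - intros s (l & _ & _ & ->). apply chain_weight_nonneg.
Qed.

Lemma chain_norm_le l : chain_in V l -> chain_norm (chain_prod op e l) <= chain_weight l.
Proof. intros Hl. apply (proj1 (chain_norm_spec _)). exists l. auto. Qed.

Lemma chain_norm_nonneg z : 0 <= chain_norm z.
Proof.
  apply (proj2 (chain_norm_spec z)). intros s (l & _ & _ & ->). apply chain_weight_nonneg.
Qed.

Lemma chain_norm_approx z eps :
  0 < eps -> exists l, chain_in V l /\ chain_prod op e l = z /\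
                       chain_weight l < chain_norm z + eps.
Proof.
  intros Heps. apply NNPP. intros Hnone.
  assert (chain_norm z + eps <= chain_norm z); [|lra].
  apply (proj2 (chain_norm_spec z)). intros s (l & Hl & Hp & ->).
  apply Rnot_lt_le. intros Hlt. apply Hnone. exists l. auto.
Qed.

Lemma chain_norm_e : chain_norm e = 0.
Proof.
  pose proof (chain_norm_le (l := nil) (Forall_nil _)).
  pose proof (chain_norm_nonneg e). simpl in *. lra.
Qed.

Lemma chain_norm_single n z : V n z -> chain_norm z <= (/2) ^ n.
Proof.
  intros Hz. pose proof (chain_norm_le (l := (n, z) :: nil)) as H. simpl in H.
  rewrite (mulg1 Hg), Rplus_0_r in H. apply H. constructor; [exact Hz | constructor].
Qed.

Lemma chain_norm_mul a b : chain_norm (op a b) <= chain_norm a + chain_norm b.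
Proof.
  apply Rnot_lt_le. intros Hlt.
  set (eps := (chain_norm (op a b) - chain_norm a - chain_norm b) / 2).
  assert (Heps : 0 < eps) by (unfold eps; lra).
  destruct (chain_norm_approx a Heps) as (la & Hla & Hpa & Hwa).
  destruct (chain_norm_approx b Heps) as (lb & Hlb & Hpb & Hwb).
  assert (Hin : chain_in V (la ++ lb)) by (apply Forall_app; auto).
  pose proof (chain_norm_le Hin) as Hle.
  rewrite (chain_prod_app Hg), chain_weight_app, Hpa, Hpb in Hle.
  unfold eps in *. lra.
Qed.

Lemma chain_norm_inv (Vsym : forall n x, V n x -> V n (inv x)) z :
  chain_norm (inv z) = chain_norm z.
Proof.
  assert (Hle : forall z, chain_norm (inv z) <= chain_norm z).
  { clear z. intros z. apply (proj2 (chain_norm_spec z)). intros s (l & Hl & Hp & ->).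
    rewrite <- (chain_inv_weight inv l), <- Hp, <- (chain_inv_prod Hg l).
    apply chain_norm_le, chain_in_inv; auto. }
  apply Rle_antisym; [apply Hle|]. rewrite <- (invK Hg z) at 1. apply Hle.
Qed.

Lemma chain_norm_small (V_e : forall n, V n e)
  (V_cube : forall n a b c, V (S n) a -> V (S n) b -> V (S n) c -> V n (op a (op b c)))
  m z : chain_norm z < (/2) ^ S m -> V m z.
Proof.
  intros Hz.
  destruct (chain_norm_approx z (eps := (/2) ^ S m - chain_norm z)) as (l & Hl & <- & Hw);
    [lra|].
  apply (chain_small_in_V Hg V_e V_cube Hl). lra.
Qed.

End ChainNorm.

Section BirkhoffKakutani.
Variables (G : Type) (opn : (G -> Prop) -> Prop)
  (op : G -> G -> G) (e : G) (inv : G -> G).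
Hypothesis Ht : is_topological_group opn op e inv.
Variable d0 : G -> G -> R.
Hypotheses (Hm0 : is_metric d0) (Hc0 : metric_compatible d0 opn).

Definition symmetric_cube_root (W S : G -> Prop) : Prop :=
  opn S /\ S e /\ (forall x, S x -> S (inv x)) /\
  (forall a b c, S a -> S b -> S c -> W (op a (op b c))).

(* Continuity of multiplication at (e, e), applied twice, gives cube roots;
   intersecting with the inverse image makes them symmetric. *)
Lemma cube_root_exists W : opn W -> W e -> exists S, symmetric_cube_root W S.
Proof.
  intros HW HWe. destruct Ht as ((_ & Hinter & _) & Hg & Hcont & Hinv).
  destruct (Hcont W e e HW) as (U1 & V1 & HU1 & HV1 & U1e & V1e & H1);
    [rewrite (mul1g Hg); exact HWe|].
  destruct (Hcont (fun x => U1 x /\ V1 x) e e) as (U2 & V2 & HU2 & HV2 & U2e & V2e & H2);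
    [apply Hinter; auto | rewrite (mul1g Hg); auto|].
  set (T := fun x => U1 x /\ U2 x /\ V2 x).
  assert (HT : opn T) by (unfold T; apply Hinter; auto).
  exists (fun x => T x /\ T (inv x)). split; [|split; [|split]].
  - apply Hinter; auto.
  - rewrite (inv1 Hg). unfold T; auto.
  - intros x [Tx Tix]. rewrite (invK Hg). auto.
  - intros a b c [[Ua _] _] [[_ [Ub _]] _] [[_ [_ Vc]] _].
    apply H1; [exact Ua | apply (H2 b c Ub Vc)].
Qed.

Fixpoint nbd_seq (n : nat) : G -> Prop :=
  match n with
  | O => fun _ => True
  | S n => epsilon (inhabits (fun _ : G => True))
             (symmetric_cube_root (fun z => nbd_seq n z /\ d0 e z < (/2) ^ n))
  end.

Lemma nbd_seq_spec n :
  opn (nbd_seq n) /\ nbd_seq n e /\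
  symmetric_cube_root (fun z => nbd_seq n z /\ d0 e z < (/2) ^ n) (nbd_seq (S n)).
Proof.
  assert (Hstep : forall n, opn (nbd_seq n) -> nbd_seq n e ->
    symmetric_cube_root (fun z => nbd_seq n z /\ d0 e z < (/2) ^ n) (nbd_seq (S n))).
  { intros k Ho He. simpl. apply epsilon_spec, cube_root_exists.
    - destruct Ht as ((_ & Hinter & _) & _). apply Hinter; [exact Ho | apply (ball_open Hm0 Hc0)].
    - split; [exact He|]. destruct Hm0 as (_ & Hzero & _).
      rewrite (proj2 (Hzero e e) eq_refl). apply half_pow_pos. }
  induction n as [|n (Ho & He & Hs)].
  - assert (Ho : opn (nbd_seq 0)) by (destruct Ht as ((HT & _) & _); exact HT).
    split; [exact Ho | split; [exact I | apply Hstep; [exact Ho | exact I]]].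
  - destruct Hs as (Ho' & He' & _). split; [exact Ho' | split; [exact He' | apply Hstep; auto]].
Qed.

Lemma nbd_open n : opn (nbd_seq n).
Proof. apply nbd_seq_spec. Qed.

Lemma nbd_e n : nbd_seq n e.
Proof. apply nbd_seq_spec. Qed.

Lemma nbd_sym n x : nbd_seq n x -> nbd_seq n (inv x).
Proof. destruct n as [|n]; [intros; exact I | apply (nbd_seq_spec n)]. Qed.

Lemma nbd_cube_full n a b c :
  nbd_seq (S n) a -> nbd_seq (S n) b -> nbd_seq (S n) c ->
  nbd_seq n (op a (op b c)) /\ d0 e (op a (op b c)) < (/2) ^ n.
Proof. apply (nbd_seq_spec n). Qed.

Lemma nbd_cube n a b c :
  nbd_seq (S n) a -> nbd_seq (S n) b -> nbd_seq (S n) c -> nbd_seq n (op a (op b c)).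
Proof. intros Ha Hb Hc. apply nbd_cube_full; auto. Qed.

Lemma nbd_ball n z : nbd_seq (S n) z -> d0 e z < (/2) ^ n.
Proof.
  intros Hz. destruct Ht as (_ & Hg & _).
  destruct (nbd_cube_full n z e e Hz (nbd_e (S n)) (nbd_e (S n))) as [_ Hball].
  rewrite !(mulg1 Hg) in Hball. exact Hball.
Qed.

Definition bk_norm : G -> R := chain_norm op e nbd_seq.

Definition bk_dist (x y : G) : R := bk_norm (op (inv x) y).

(* A small norm means d0-close to e: this links the two topologies. *)
Lemma bk_norm_small n z : bk_norm z < (/2) ^ S (S n) -> d0 e z < (/2) ^ n.
Proof.
  intros Hz. destruct Ht as (_ & Hg & _). apply nbd_ball.
  apply (chain_norm_small Hg nbd_seq (fun _ => I) nbd_e nbd_cube). exact Hz.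
Qed.

Lemma bk_norm_zero z : bk_norm z = 0 -> z = e.
Proof.
  intros Hz. destruct Hm0 as (Hpos & Hzero & _).
  destruct (Rle_lt_or_eq_dec 0 (d0 e z) (Hpos e z)) as [Hlt|Heq].
  - destruct (half_pow_small Hlt) as [n Hn].
    assert (d0 e z < (/2) ^ n); [|lra].
    apply bk_norm_small. rewrite Hz. apply half_pow_pos.
  - symmetry. apply Hzero. auto.
Qed.

Lemma bk_metric : is_metric bk_dist.
Proof.
  destruct Ht as (_ & Hg & _). unfold bk_dist, bk_norm.
  assert (Hfull : forall z, nbd_seq 0 z) by (intros; exact I).
  split; [|split; [|split]].
  - intros x y. apply (chain_norm_nonneg Hg nbd_seq Hfull).
  - intros x y. split.
    + intros H. apply bk_norm_zero in H. rewrite <- (mulKVg Hg x y), H, (mulg1 Hg). reflexivity.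
    + intros ->. rewrite (mulVg Hg). apply (chain_norm_e Hg nbd_seq Hfull).
  - intros x y. rewrite <- (chain_norm_inv Hg nbd_seq Hfull nbd_sym), (invM Hg), (invK Hg).
    reflexivity.
  - intros x y z. pose proof (chain_norm_mul Hg nbd_seq Hfull (op (inv x) y) (op (inv y) z)) as H.
    rewrite (mulA Hg), (mulKVg Hg) in H. exact H.
Qed.

Lemma bk_left_invariant : left_invariant op bk_dist.
Proof.
  destruct Ht as (_ & Hg & _). intros g x y. unfold bk_dist.
  rewrite (invM Hg), (mulA Hg), (mulKg Hg). reflexivity.
Qed.

(* Compatibility: d-balls around x are x * (d-balls around e); the latter
   shrink into every V_n and, by [bk_norm_small], into every d0-ball. *)
Lemma bk_compatible : metric_compatible bk_dist opn.
Proof.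
  destruct Ht as (_ & Hg & Hcont & _). intros U. split.
  - intros HU x Ux.
    destruct (Hcont U x e HU) as (A & B & HA & HB & Ax & Be & HAB); [rewrite (mulg1 Hg); auto|].
    destruct (open_ball_inside Hc0 B e HB Be) as (r0 & Hr0 & Hball).
    destruct (half_pow_small Hr0) as [n Hn].
    exists ((/2) ^ S (S n)). split; [apply half_pow_pos|].
    intros y Hy. rewrite <- (mulKVg Hg x y). apply HAB; [exact Ax|].
    apply Hball. apply bk_norm_small in Hy. lra.
  - intros HU. apply Hc0. intros x Ux.
    destruct (HU x Ux) as (r & Hr & Hball).
    destruct (half_pow_small Hr) as [n Hn].
    destruct (Hcont (nbd_seq n) (inv x) x (nbd_open n)) as (A & B & HA & HB & Ax & Bx & HAB);
      [rewrite (mulVg Hg); apply nbd_e|].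
    destruct (open_ball_inside Hc0 B x HB Bx) as (r0 & Hr0 & Hb0).
    exists r0. split; [exact Hr0|]. intros y Hy. apply Hball.
    pose proof (chain_norm_single Hg nbd_seq (fun _ => I) n _ (HAB _ _ Ax (Hb0 y Hy))).
    unfold bk_dist, bk_norm. lra.
Qed.

End BirkhoffKakutani.

Lemma left_invariant_metric_exists (G : Type) (opn : (G -> Prop) -> Prop)
  (op : G -> G -> G) (e : G) (inv : G -> G) :
  is_topological_group opn op e inv -> metrizable opn ->
  exists d, is_metric d /\ left_invariant op d /\ metric_compatible d opn.
Proof.
  intros Ht (d0 & Hm0 & Hc0).
  exists (bk_dist opn op e inv d0). split; [|split].
  - apply bk_metric; auto.
  - apply bk_left_invariant; auto.
  - apply bk_compatible; auto.
Qed.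

Section SelectionVersusHaver.
Variables (G : Type) (opn : (G -> Prop) -> Prop) (op : G -> G -> G) (e : G) (inv : G -> G).
Hypothesis Hg : is_group op e inv.
Variable d : G -> G -> R.
Hypotheses (Hm : is_metric d) (Hli : left_invariant op d) (Hc : metric_compatible d opn).

Lemma translate_ball_diam x r a b :
  ltrans op x (fun z => d e z < r) a -> ltrans op x (fun z => d e z < r) b -> d a b < 2 * r.
Proof.
  intros (u & Hu & ->) (v & Hv & ->). destruct Hm as (_ & _ & Hsym & Htri).
  rewrite Hli. pose proof (Htri u e v) as Htr. rewrite (Hsym u e) in Htr. lra.
Qed.

(* (1) => (2): select from the covers by translates of B(e, eps_n / 3). *)
Lemma Sc_implies_Haver : Sc_Onbd_O opn op e -> Haver opn d.
Proof.
  intros HS eps Heps.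
  destruct (HS (fun n z => d e z < eps n / 3)) as (Bs & HB & Hcov).
  - intros n. split; [apply (ball_open Hm Hc)|].
    destruct Hm as (_ & Hzero & _). rewrite (proj2 (Hzero e e) eq_refl).
    specialize (Heps n). lra.
  - exists Bs. split; [|exact Hcov]. intros n. destruct (HB n) as [Hdisj Href].
    split; [exact Hdisj|]. intros A HA. destruct (Href A HA) as (W & [x ->] & HAW).
    exists (2 * (eps n / 3)). split; [specialize (Heps n); lra|].
    intros a b Ha Hb. left. apply translate_ball_diam with x; auto.
Qed.

Lemma small_set_in_translate (A : G -> Prop) r v :
  diam_lt d A r -> A v -> forall z, A z -> ltrans op v (fun y => d e y < r) z.
Proof.
  intros (s & Hs & Hdiam) Av z Az. exists (op (inv v) z).
  split; [|symmetry; apply (mulKVg Hg)].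
  rewrite <- (dist_from_e Hg Hli). specialize (Hdiam v z Av Az). lra.
Qed.

(* (2) => (1): apply Haver with radii of balls B(e, r_n) inside U_n. *)
Lemma Haver_implies_Sc : Haver opn d -> Sc_Onbd_O opn op e.
Proof.
  intros HH U HU.
  assert (Hr : forall n, {r | 0 < r /\ forall y, d e y < r -> U n y}).
  { intros n. apply constructive_indefinite_description.
    destruct (HU n) as [Ho He]. exact (open_ball_inside Hc (U n) e Ho He). }
  destruct (HH (fun n => proj1_sig (Hr n))) as (Vs & HV & Hcov);
    [intros n; apply (proj2_sig (Hr n))|].
  exists Vs. split; [|exact Hcov]. intros n. destruct (HV n) as [Hdisj Hdiam].
  split; [exact Hdisj|]. intros A HA.
  destruct (proj2_sig (Hr n)) as [_ Hball].
  destruct (classic (exists v, A v)) as [[v Av]|Hempty].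
  - exists (ltrans op v (U n)). split; [exists v; reflexivity|].
    intros z Az. destruct (small_set_in_translate v (Hdiam A HA) Av z Az) as (y & Hy & ->).
    exists y. auto.
  - exists (ltrans op e (U n)). split; [exists e; reflexivity|].
    intros z Az. exfalso. apply Hempty. exists z. exact Az.
Qed.

End SelectionVersusHaver.

Unset Implicit Arguments.

Theorem theorem2p2 (G : Type) (opn : (G -> Prop) -> Prop)
  (op : G -> G -> G) (e : G) (inv : G -> G) :
  is_topological_group opn op e inv ->
  metrizable opn ->
  (Sc_Onbd_O opn op e <->
   (forall d : G -> G -> R, is_metric d -> left_invariant op d ->
      metric_compatible d opn -> Haver opn d)).
Proof.
  intros Ht Hmetr. pose proof Ht as (_ & Hg & _). split.
  - intros HS d Hm Hli Hc. exact (Sc_implies_Haver Hm Hli Hc HS).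
  - intros HH.
    destruct (left_invariant_metric_exists Ht Hmetr) as (d & Hm & Hli & Hc).
    exact (Haver_implies_Sc Hg Hli Hc (HH d Hm Hli Hc)).
Qed.
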